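(* The deformed Fock–Goncharov tropicalization of the generalized Markov tree is the classical Euclid tree, in the following precise sense. Let $(x_1,x_2,x_3)\in\mathbb{Z}^3$ satisfy the tropicalized equation $\max(2x_1,2x_2,2x_3)=x_1+x_2+x_3$, and let $i\in\{1,2,3\}$ be such that $x_i\neq\max(x_1,x_2,x_3)$. Then the tropicalized mutation $\mu_i^t$ coincides with the classical Euclid mutation $\mathcal{M}_i$ at $(x_1,x_2,x_3)$: $\mu_1^t(x)=(x_2+x_3,x_2,x_3)$ if $i=1$, $\mu_2^t(x)=(x_1,x_1+x_3,x_3)$ if $i=2$, $\mu_3^t(x)=(x_1,x_2,x_1+x_2)$ if $i=3$. Consequently, along the generalized Markov tree (where at every step from a triple other than $(1,1,1)$ the mutated coordinate is not the maximal one), the tropicalized mutation rules are exactly the generating rules of the classical Euclid tree.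
   Context: Fix $\lambda_1,\lambda_2,\lambda_3\in\mathbb{Z}_{\ge 0}$. The generalized Markov equation is $X_1^2+X_2^2+X_3^2+\lambda_3X_1X_2+\lambda_1X_2X_3+\lambda_2X_3X_1=(3+\lambda_1+\lambda_2+\lambda_3)X_1X_2X_3$. Its mutations are $\mu_1(x_1,x_2,x_3)=(\frac{x_2^2+\lambda_1x_2x_3+x_3^2}{x_1},x_2,x_3)$, $\mu_2(x_1,x_2,x_3)=(x_1,\frac{x_1^2+\lambda_2x_1x_3+x_3^2}{x_2},x_3)$, $\mu_3(x_1,x_2,x_3)=(x_1,x_2,\frac{x_1^2+\lambda_3x_1x_2+x_2^2}{x_3})$; all positive integer solutions (generalized Markov triples) are obtained from $(1,1,1)$ by these mutations, forming the generalized Markov tree, and for a triple $\neq(1,1,1)$ obtained this way, the next mutations are applied at coordinates that are not the maximal one. Fock–Goncharov tropicalization of a subtraction-free expression replaces multiplication by addition, addition by $\max$ and ignores positive coefficients; the ''deformed'' version further replaces the tropical variables by integer variables $x_i$, requires that an expression equal to a constant be sent to $0$, and requires that $x_i$ is maximal among $x_1,x_2,x_3$ exactly when $X_i$ is maximal among $X_1,X_2,X_3$. This turns the generalized Markov equation into $\max(2x_1,2x_2,2x_3)=x_1+x_2+x_3$ and the mutations into $\mu_1^t(x)=(\max(2x_2,2x_3)-x_1,x_2,x_3)$, $\mu_2^t(x)=(x_1,\max(2x_1,2x_3)-x_2,x_3)$, $\mu_3^t(x)=(x_1,x_2,\max(2x_1,2x_2)-x_3)$. The classical Euclid mutations are $\mathcal{M}_1(x,y,z)=(y+z,y,z)$,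 $\mathcal{M}_2(x,y,z)=(x,x+z,z)$, $\mathcal{M}_3(x,y,z)=(x,y,x+y)$. *)

From Stdlib Require Import ZArith.
Open Scope Z_scope.

Definition triple := (Z * Z * Z)%type.

(* coordinate i (1-based) of a triple; indices outside {1,2,3} are never used *)
Definition coord (i : nat) (x : triple) : Z :=
  let '(x1, x2, x3) := x in
  match i with 1%nat => x1 | 2%nat => x2 | _ => x3 end.

Definition max3 (a b c : Z) : Z := Z.max a (Z.max b c).

Definition trop_markov (x : triple) : Prop :=
  let '(x1, x2, x3) := x in max3 (2 * x1) (2 * x2) (2 * x3) = x1 + x2 + x3.

Definition mu_t (i : nat) (x : triple) : triple :=
  let '(x1, x2, x3) := x in
  match i with
  | 1%nat => (Z.max (2 * x2) (2 * x3) - x1, x2, x3)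
  | 2%nat => (x1, Z.max (2 * x1) (2 * x3) - x2, x3)
  | _ => (x1, x2, Z.max (2 * x1) (2 * x2) - x3)
  end.

Definition euclid (i : nat) (x : triple) : triple :=
  let '(x1, x2, x3) := x in
  match i with
  | 1%nat => (x2 + x3, x2, x3)
  | 2%nat => (x1, x1 + x3, x3)
  | _ => (x1, x2, x1 + x2)
  end.

(** If [x_i] is not the largest coordinate, then [2 x_i] is not the largest
    of the doubled coordinates either, so the tropical equation reads
    [max(2x_j, 2x_k) = x_1 + x_2 + x_3]; subtracting [x_i] turns the
    tropical mutation [max(2x_j, 2x_k) - x_i] into the Euclid sum [x_j + x_k]. *)
From Stdlib Require Import ZArith Lia.
Open Scope Z_scope.

Lemma max3_comm12 (a b c : Z) : max3 a b c = max3 b a c.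
Proof. unfold max3; lia. Qed.

Lemma max3_rotate (a b c : Z) : max3 a b c = max3 c a b.
Proof. unfold max3; lia. Qed.

Lemma max3_not_first {a b c : Z} : a <> max3 a b c -> max3 a b c = Z.max b c.
Proof. unfold max3; lia. Qed.

Lemma max3_double (a b c : Z) : max3 (2 * a) (2 * b) (2 * c) = 2 * max3 a b c.
Proof. unfold max3; lia. Qed.

Lemma trop_markov_comm12 (a b c : Z) : trop_markov (a, b, c) -> trop_markov (b, a, c).
Proof. unfold trop_markov; rewrite max3_comm12; lia. Qed.

Lemma trop_markov_rotate (a b c : Z) : trop_markov (a, b, c) -> trop_markov (c, a, b).
Proof. unfold trop_markov; rewrite max3_rotate; lia. Qed.

Lemma trop_mutation_not_max {a b c : Z} :
  trop_markov (a, b, c) -> a <> max3 a b c ->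
  Z.max (2 * b) (2 * c) - a = b + c.
Proof.
  unfold trop_markov; intros Hmarkov Hnot_max.
  assert (Hmax : Z.max (2 * b) (2 * c) = a + b + c).
  { rewrite <- Hmarkov, max3_double, (max3_not_first Hnot_max); lia. }
  lia.
Qed.

Theorem theorem3p7 (x1 x2 x3 : Z) (i : nat) :
  (1 <= i <= 3)%nat ->
  trop_markov (x1, x2, x3) ->
  coord i (x1, x2, x3) <> max3 x1 x2 x3 ->
  mu_t i (x1, x2, x3) = euclid i (x1, x2, x3).
Proof.
  intros Hi Hmarkov Hnot_max.
  destruct i as [|[|[|[|i]]]]; try lia; cbv beta iota delta [mu_t euclid coord] in *.
  - now rewrite (trop_mutation_not_max Hmarkov Hnot_max).
  - rewrite max3_comm12 in Hnot_max.
    now rewrite (trop_mutation_not_max (trop_markov_comm12 _ _ _ Hmarkov) Hnot_max).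
  - rewrite max3_rotate in Hnot_max.
    now rewrite (trop_mutation_not_max (trop_markov_rotate _ _ _ Hmarkov) Hnot_max).
Qed.
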